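(* Let $C$ be a ring, $J\subset C$ a finitely generated prime ideal, $B=C/J$, and $b\in B$ an element such that the induced morphism $\operatorname{Spec}(B_b)\to\operatorname{Spec}(C)$ is an open immersion. Then there exist an integer $n>0$ and an element $c\in C$ lifting $b^n$ such that $J=\operatorname{Ann}_C(c)$. *)

(* commutative rings (possibly trivial: comPzRingType),
   ideals as Prop-valued predicates, prime spectra as sets of prime ideals. *)
From HB Require Import structures.
From mathcomp Require Import all_boot all_order all_algebra.
Set Implicit Arguments. Unset Strict Implicit. Unset Printing Implicit Defensive.
Import GRing.Theory.
Local Open Scope ring_scope.

Section Defs.
Variable R : comPzRingType.

Definition is_ideal (I : R -> Prop) : Prop :=
  [/\ I 0, (forall x y, I x -> I y -> I (x + y)) & (forall a x, I x -> I (a * x))].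

Definition is_prime_ideal (I : R -> Prop) : Prop :=
  [/\ is_ideal I, ~ I 1 & (forall x y, I (x * y) -> I x \/ I y)].

Definition fin_gen_ideal (I : R -> Prop) : Prop :=
  exists (n : nat) (g : 'I_n -> R),
    forall x, I x <-> exists a : 'I_n -> R, x = \sum_(i < n) a i * g i.
End Defs.

Definition is_quotient_map (C B : comPzRingType) (pi : {rmorphism C -> B})
    (J : C -> Prop) : Prop :=
  (forall y : B, exists x : C, pi x = y) /\ (forall x, pi x = 0 <-> J x).

(* phi : B -> A exhibits A as the localization B_b (elementwise characterization:
   phi b invertible, kernel = b-power torsion, every element is phi x / phi b^n) *)
Definition is_localization_at (B A : comPzRingType) (phi : {rmorphism B -> A})
    (b : B) : Prop :=
  [/\ exists u : A, phi b * u = 1,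
      (forall x, phi x = 0 <-> exists n : nat, b ^+ n * x = 0)
    & (forall a : A, exists (x : B) (n : nat), a * phi b ^+ n = phi x)].

(* Spec(psi) : Spec A -> Spec C, q |-> psi^{-1}(q), is an open immersion:
   (1) injective, (2) its image is Zariski-open in Spec C,
   (3) it maps Zariski-open sets of Spec A onto relatively open subsets of the
   image (so it is a homeomorphism onto an open subset; continuity is automatic),
   (4) for every prime q of A, the induced map on stalks
       C_{psi^{-1} q} -> A_q is an isomorphism (injective and surjective).
   Zariski opens are the unions of basic opens D(f) = {p | f \notin p}. *)
Definition spec_open_immersion (C A : comPzRingType) (psi : C -> A) : Prop :=
  [/\
      (forall q1 q2 : A -> Prop, is_prime_ideal q1 -> is_prime_ideal q2 ->
         (forall x, q1 (psi x) <-> q2 (psi x)) -> forall a, q1 a <-> q2 a),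
      (exists S : C -> Prop, forall p : C -> Prop, is_prime_ideal p ->
         ((exists q : A -> Prop, is_prime_ideal q /\ forall x, p x <-> q (psi x))
          <-> exists f, S f /\ ~ p f)),
      (forall T : A -> Prop, exists S : C -> Prop,
         forall q : A -> Prop, is_prime_ideal q ->
           ((exists a, T a /\ ~ q a) <-> exists f, S f /\ ~ q (psi f))),
      (forall q : A -> Prop, is_prime_ideal q -> forall x : C,
         (exists t : A, ~ q t /\ psi x * t = 0) ->
         exists s : C, ~ q (psi s) /\ x * s = 0)
    &
      (forall q : A -> Prop, is_prime_ideal q -> forall a : A,
         exists (x s : C) (t : A), [/\ ~ q (psi s), ~ q t &
                                      t * (psi s * a - psi x) = 0])].

From HB Require Import structures.
From mathcomp Require Import all_boot all_order all_algebra.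
From mathcomp Require Import ring boolp classical_sets.
Set Implicit Arguments.
Unset Strict Implicit.
Unset Printing Implicit Defensive.
Import GRing.Theory.
Local Open Scope classical_set_scope.
Local Open Scope ring_scope.

(* Only the injectivity of the stalk maps of Spec(B_b) -> Spec(C) is needed.
   Let q be a prime of A = B_b. The finitely many generators of J vanish in A,
   so each is killed by an element of C whose image avoids q; their product lies
   in Ann_C(J) and its image avoids q. Hence the extension of Ann_C(J) to A lies
   in no prime ideal, so it is the unit ideal: some s in Ann_C(J) maps to b^k in
   B_b. As B is a domain and b <> 0, B -> B_b is injective and s lifts b^k.
   With e a lift of b (to make the exponent positive), c = s e kills J and lifts
   b^(k+1) <> 0, so c is not in J, and primality of J gives J = Ann_C(c). *)

Section IdealTheory.
Variable R : comPzRingType.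
Implicit Types (I L M : set R) (x y z : R).

Definition is_maximal_ideal M : Prop :=
  [/\ is_ideal M, ~ M 1 &
      forall I, is_ideal I -> ~ I 1 -> M `<=` I -> I `<=` M].

Lemma bigcup_chain_ideal (F : set (set R)) :
  F !=set0 -> (forall I, F I -> is_ideal I) ->
  total_on F (@subset R) -> is_ideal (\bigcup_(I in F) I).
Proof.
move=> [I0 FI0] Fideal Ftot; split.
- by exists I0 => //; case: (Fideal I0 FI0).
- move=> x y [I FI Ix] [I' FI' I'y].
  have [II'|I'I] := Ftot I I' FI FI'.
  + by exists I' => //; have [_ ID _] := Fideal I' FI'; apply: ID (II' x Ix) I'y.
  + by exists I => //; have [_ ID _] := Fideal I FI; apply: ID Ix (I'I y I'y).
- by move=> a x [I FI Ix]; exists I => //; have [_ _ IM] := Fideal I FI; apply: IM.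
Qed.

Lemma maximal_ideal_sup L :
  is_ideal L -> ~ L 1 -> exists2 M, is_maximal_ideal M & L `<=` M.
Proof.
move=> L_ideal L1.
pose T := {I : set R | [/\ is_ideal I, ~ I 1 & L `<=` I]}.
pose le (X X' : T) := `[< sval X `<=` sval X' >].
have le_trans (X1 X2 X3 : T) : le X1 X2 -> le X2 X3 -> le X1 X3.
  by move=> /asboolP X12 /asboolP X23; apply/asboolP => x /X12 /X23.
have chain_ub (F : set T) : total_on F le -> exists U, forall X, F X -> le X U.
  (* Adding [L] makes the chain nonempty, so the empty chain needs no special case. *)
  move=> Ftot; pose G := [set sval X | X in F] `|` [set L].
  have Gideal I : G I -> is_ideal I by case=> [[X _ <-]|->] //; case: (svalP X).
  have Gtot : total_on G (@subset R).
    move=> _ _ [[X FX <-]|->] [[X' FX' <-]|->].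
    - by have [/asboolP|/asboolP] := Ftot X X' FX FX'; [left|right].
    - by right; case: (svalP X).
    - by left; case: (svalP X').
    - by left.
  have U1 : ~ (\bigcup_(I in G) I) 1.
    by move=> [_ [[X _ <-]|->]] //; case: (svalP X).
  have LU : L `<=` \bigcup_(I in G) I by move=> x Lx; exists L => //; right.
  have G0 : G !=set0 by exists L; right.
  exists (exist _ _ (And3 (bigcup_chain_ideal G0 Gideal Gtot) U1 LU) : T).
  by move=> X FX; apply/asboolP => x Xx; exists (sval X) => //; left; exists X.
have le_refl (X : T) : le X X by apply/asboolP.
have [[M [M_ideal M1 LM]] Mmax] :=
  ZL_preorder (exist _ L (And3 L_ideal L1 (@subset_refl _ L)) : T) le_refl le_trans chain_ub.
exists M => //; split=> // I I_ideal I1 MI.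
by have /asboolP := Mmax (exist _ I (And3 I_ideal I1 (subset_trans LM MI))) (asboolT MI).
Qed.

Lemma maximal_ideal_adjoin1 M z :
  is_maximal_ideal M -> ~ M z -> exists m r, M m /\ 1 = m + r * z.
Proof.
move=> [[M0 MD MM] _ Mmax] notMz; apply: contrapT => no1.
pose Mz := [set w : R | exists m r, M m /\ w = m + r * z].
have Mz_ideal : is_ideal Mz.
  split.
  - by exists 0, 0; rewrite mul0r addr0.
  - move=> _ _ [m [r [Mm ->]]] [m' [r' [Mm' ->]]].
    by exists (m + m'), (r + r'); rewrite mulrDl addrACA; split=> //; apply: MD.
  - move=> a _ [m [r [Mm ->]]].
    by exists (a * m), (a * r); rewrite mulrDr mulrA; split=> //; apply: MM.
have MMz : M `<=` Mz by move=> m Mm; exists m, 0; rewrite mul0r addr0.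
by apply/notMz/(Mmax Mz) => //; exists 0, 1; rewrite add0r mul1r.
Qed.

Lemma maximal_ideal_prime M : is_maximal_ideal M -> is_prime_ideal M.
Proof.
move=> M_max; have [M_ideal M1 _] := M_max; have [_ MD MM] := M_ideal.
split=> // x y Mxy; apply: contrapT => /not_orP[Mx My].
have [m [r [Mm E]]] := maximal_ideal_adjoin1 M_max Mx.
have [m' [r' [Mm' E']]] := maximal_ideal_adjoin1 M_max My.
have MMr a w : M w -> M (w * a) by rewrite mulrC; apply: MM.
apply: M1; rewrite -[1]mulr1 {1}E E' mulrDl !mulrDr mulrACA.
by apply: (MD); apply: (MD); [exact: MMr | exact: MMr | exact: MM | exact: MM].
Qed.

Lemma ideal1_of_not_sub_prime L :
  is_ideal L -> (forall q, is_prime_ideal q -> ~ L `<=` q) -> L 1.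
Proof.
move=> L_ideal Lq; apply: contrapT => L1.
have [M /maximal_ideal_prime M_prime LM] := maximal_ideal_sup L_ideal L1.
exact: Lq M_prime LM.
Qed.

Definition annihilator I : set R := [set s | forall x, I x -> x * s = 0].

Lemma annihilator_ideal I : is_ideal (annihilator I).
Proof.
split=> [x _|s t As At x Ix|a s As x Ix]; first by rewrite mulr0.
  by rewrite mulrDr As ?At ?addr0.
by rewrite mulrCA As ?mulr0.
Qed.

Lemma prime_ideal_annihilator J c :
  is_prime_ideal J -> annihilator J c -> ~ J c -> forall x, J x <-> x * c = 0.
Proof.
move=> [[J0 _ _] _ Jprime] Jc notJc x; split; first exact: Jc.
by move=> xc0; have /Jprime[] : J (x * c) by rewrite xc0.
Qed.

Lemma fin_gen_ideal_torsion_ann J (S : set R) :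
  fin_gen_ideal J -> S 1 -> (forall s t, S s -> S t -> S (s * t)) ->
  (forall x, J x -> exists2 s, S s & x * s = 0) ->
  exists2 s, S s & annihilator J s.
Proof.
move=> [n [g Jg]] S1 SM Jtors.
have gJ i : J (g i).
  apply/Jg; exists (fun j => (j == i)%:R).
  by rewrite (bigD1 i) //= eqxx mul1r big1 ?addr0 // => j /negbTE ->; rewrite mul0r.
have /fin_all_exists[s gs] i : exists s, S s /\ g i * s = 0.
  by have [s Ss gs] := Jtors _ (gJ i); exists s.
exists (\prod_i s i); first by apply: big_ind => // i _; case: (gs i).
move=> _ /Jg[a ->]; rewrite mulr_suml big1 // => i _.
by rewrite (bigD1 i) //= mulrA -(mulrA (a i)) (proj2 (gs i)) mulr0 !mul0r.
Qed.
End IdealTheory.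

Section PrimeQuotient.
Variables (C B : comPzRingType) (pi : {rmorphism C -> B}) (J : set C).
Hypotheses (pi_quot : is_quotient_map pi J) (J_prime : is_prime_ideal J).

Lemma prime_quotient_mul_eq0 (x y : B) : x * y = 0 -> x = 0 \/ y = 0.
Proof.
have [pi_surj pi_ker] := pi_quot; have [_ _ Jprime] := J_prime.
have [x' <-] := pi_surj x; have [y' <-] := pi_surj y.
by rewrite -rmorphM => /pi_ker/Jprime[/pi_ker|/pi_ker]; [left|right].
Qed.

Lemma prime_quotient_expr_neq0 (x : B) n : x != 0 -> x ^+ n != 0.
Proof.
have [_ J1 _] := J_prime.
move=> x_neq0; elim: n => [|n IHn].
  by rewrite expr0 -(rmorph1 pi); apply/eqP => /pi_quot.2/J1.
by rewrite exprS; apply/eqP => /prime_quotient_mul_eq0[]/eqP; apply/negP.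
Qed.
End PrimeQuotient.

Lemma localization_inj (B A : comPzRingType) (phi : {rmorphism B -> A}) b :
  is_localization_at phi b -> (forall x, b * x = 0 -> x = 0) -> injective phi.
Proof.
move=> [_ phi_ker _] b_reg x y /eqP; rewrite -subr_eq0 -rmorphB => /eqP/phi_ker[n bxy].
apply/eqP; rewrite -subr_eq0; apply/eqP.
by elim: n bxy => [|n IHn]; rewrite ?expr0 ?mul1r // exprS -mulrA => /b_reg.
Qed.

Section ExtendedIdeal.
Variables (C A : comPzRingType) (f : {rmorphism C -> A}) (e : C).
Hypothesis f_frac : forall a : A, exists y n, a * f e ^+ n = f y.

(* When [A] is the localisation of [C] at [e], this is the extension [I A]. *)
Definition extended_ideal (I : set C) : set A :=
  [set a | exists s n, I s /\ a * f e ^+ n = f s].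

Lemma extended_ideal_ideal I : is_ideal I -> is_ideal (extended_ideal I).
Proof.
move=> [I0 ID IM]; split.
- by exists 0, 0%N; rewrite mul0r rmorph0.
- move=> a a' [s [n [Is Ea]]] [s' [n' [Is' Ea']]].
  exists (e ^+ n' * s + e ^+ n * s'), (n + n')%N; split; first by apply: ID; apply: IM.
  by rewrite rmorphD !rmorphM !rmorphXn -Ea -Ea' exprD; ring.
- move=> r a [s [n [Is Ea]]]; have [y [m Er]] := f_frac r.
  exists (y * s), (m + n)%N; split; first exact: IM.
  by rewrite rmorphM -Er -Ea exprD mulrACA.
Qed.
End ExtendedIdeal.

Lemma fin_gen_ann_not_in_prime (C A : comPzRingType) (f : {rmorphism C -> A})
    (J : set C) (q : set A) :
  is_prime_ideal q -> fin_gen_ideal J -> (forall x, J x -> f x = 0) ->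
  (forall x, (exists t, ~ q t /\ f x * t = 0) -> exists s, ~ q (f s) /\ x * s = 0) ->
  exists2 s, annihilator J s & ~ q (f s).
Proof.
move=> [_ q1 q_prime] J_fg fJ0 f_stalk_inj.
have [|s t|x Jx|s qs Js] := fin_gen_ideal_torsion_ann (S := [set s | ~ q (f s)]) J_fg.
- by rewrite /= rmorph1.
- by rewrite /= rmorphM => qs qt /q_prime[].
- have [|s [qs xs]] := f_stalk_inj x; first by exists 1; rewrite fJ0 // mul0r.
  by exists s.
- by exists s.
Qed.

Theorem lemma2p7 (C B A : comPzRingType) (J : C -> Prop)
    (pi : {rmorphism C -> B}) (phi : {rmorphism B -> A}) (b : B) :
  is_prime_ideal J -> fin_gen_ideal J ->
  is_quotient_map pi J ->
  is_localization_at phi b ->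
  b != 0 ->
  spec_open_immersion (fun x : C => phi (pi x)) ->
  exists n : nat, (0 < n)%N /\
    exists c : C, pi c = b ^+ n /\ (forall x : C, J x <-> x * c = 0).
Proof.
move=> J_prime J_fg pi_quot phi_loc b_neq0 [_ _ _ stalk_inj _].
have [[pi_surj pi_ker] [_ _ phi_frac]] := (pi_quot, phi_loc).
have [e pi_e] := pi_surj b.
have psi_frac (a : A) : exists y n, a * (phi \o pi) e ^+ n = (phi \o pi) y.
  have [y [n ay]] := phi_frac a; have [y' y'y] := pi_surj y.
  by exists y', n; rewrite /= pi_e y'y.
have psi_J x : J x -> (phi \o pi) x = 0 by move/pi_ker => /= ->; rewrite rmorph0.
have Ann_unit : extended_ideal (phi \o pi) e (annihilator J) 1.
  apply: ideal1_of_not_sub_prime (extended_ideal_ideal psi_frac (annihilator_ideal J)) _.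
  move=> q q_prime Ann_q.
  have [s Js qs] := fin_gen_ann_not_in_prime q_prime J_fg psi_J (stalk_inj q q_prime).
  by apply/qs/Ann_q; exists s, 0%N; rewrite mulr1.
have b_reg x : b * x = 0 -> x = 0.
  by case/(prime_quotient_mul_eq0 pi_quot J_prime) => // b0; rewrite b0 eqxx in b_neq0.
have [s [k [Js]]] := Ann_unit; rewrite mul1r /= pi_e -rmorphXn.
move=> /(localization_inj phi_loc b_reg)/esym pi_s.
have pi_c : pi (s * e) = b ^+ k.+1 by rewrite rmorphM pi_s pi_e exprSr.
exists k.+1; split=> //; exists (s * e); split=> //.
apply: prime_ideal_annihilator => //; first by move=> x Jx; rewrite mulrA Js ?mul0r.
by move/pi_ker; rewrite pi_c; apply/eqP/(prime_quotient_expr_neq0 pi_quot J_prime).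
Qed.
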